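(* Let $f\in\mathrm{AC}^1$. If $n_j$ is an odd sequence then \[ \lim_{j\to\infty} n_j\,\big\|B_{n_j}(f)-f-O(f)/D_{n_j}\big\|_\infty=0, \] and if $n_j$ is an even sequence then \[ \lim_{j\to\infty} n_j\,\big\|B_{n_j}(f)-f-E(f)/D_{n_j}\big\|_\infty=0. \]
   Context: Nodes: $x_{k,n}:=2k/n-1$, $k=0,\dots,n$. $B_n(f,x):=N_n(f,x)/D_n(x)$ for $x$ not a node, $B_n(f,x_{k,n}):=f(x_{k,n})$, where $N_n(f,x)=\sum_{k=0}^n(-1)^k\frac{f(x_{k,n})}{x-x_{k,n}}$ and $D_n(x)=\sum_{k=0}^n(-1)^k\frac{1}{x-x_{k,n}}$. $\mathrm{AC}^1$: functions $f:[-1,1]\to\mathbb{R}$ differentiable at every point of $[-1,1]$ (one-sided at $\pm1$) with $f'$ absolutely continuous. A sequence $n_j$ is a strictly increasing map $\mathbb{N}\to\mathbb{N}$; odd/even if all $n_j$ are odd/even. For $x\in(-1,1)$, $O(f,x):=\frac{f(x)-f(1)}{2(x-1)}-\frac{f(x)-f(-1)}{2(x+1)}$ and $E(f,x):=\frac{f(1)-f(x)}{2(x-1)}+\frac{f(-1)-f(x)}{2(x+1)}$. The sup norm is taken over the points $x\in(-1,1)$ that are not nodes $x_{k,n_j}$ (at the nodes the expressions extend continuously by $0$). *)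

From Stdlib Require Import Reals Lra Lia.
Open Scope R_scope.

Fixpoint rsum (F : nat -> R) (m : nat) : R :=
  match m with
  | O => 0
  | S p => rsum F p + F p
  end.

Definition node (n k : nat) : R := 2 * INR k / INR n - 1.

Definition Nn (n : nat) (f : R -> R) (x : R) : R :=
  rsum (fun k => (-1) ^ k * f (node n k) / (x - node n k)) (S n).

Definition Dn (n : nat) (x : R) : R :=
  rsum (fun k => (-1) ^ k / (x - node n k)) (S n).

Fixpoint node_index (n : nat) (x : R) (m : nat) : option nat :=
  match m with
  | O => None
  | S p =>
      match node_index n x p with
      | Some k => Some k
      | None => if Req_EM_T x (node n p) then Some p else None
      end
  end.

Definition is_node (n : nat) (x : R) : Prop :=
  exists k, (k <= n)%nat /\ x = node n k.

Definition Bn (n : nat) (f : R -> R) (x : R) : R :=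
  match node_index n x (S n) with
  | Some k => f (node n k)
  | None => Nn n f x / Dn n x
  end.

Definition Ofun (f : R -> R) (x : R) : R :=
  (f x - f 1) / (2 * (x - 1)) - (f x - f (-1)) / (2 * (x + 1)).
Definition Efun (f : R -> R) (x : R) : R :=
  (f 1 - f x) / (2 * (x - 1)) + (f (-1) - f x) / (2 * (x + 1)).

(* l is the derivative of f at x relative to [a,b] (one-sided at endpoints) *)
Definition deriv_within (f : R -> R) (a b x l : R) : Prop :=
  forall eps, 0 < eps -> exists delta, 0 < delta /\
    forall y, a <= y <= b -> y <> x -> Rabs (y - x) < delta ->
      Rabs ((f y - f x) / (y - x) - l) < eps.

Definition abs_cont_on (g : R -> R) (a b : R) : Prop :=
  forall eps, 0 < eps -> exists delta, 0 < delta /\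
    forall (m : nat) (u v : nat -> R),
      (forall k, (k < m)%nat -> a <= u k /\ u k <= v k /\ v k <= b) ->
      (forall i j, (i < m)%nat -> (j < m)%nat -> i <> j ->
         v i <= u j \/ v j <= u i) ->
      rsum (fun k => v k - u k) m < delta ->
      rsum (fun k => Rabs (g (v k) - g (u k))) m < eps.

Definition AC1 (f : R -> R) : Prop :=
  exists f' : R -> R,
    (forall x, -1 <= x <= 1 -> deriv_within f (-1) 1 x (f' x)) /\
    abs_cont_on f' (-1) 1.

Definition strict_incr (s : nat -> nat) : Prop :=
  forall i j, (i < j)%nat -> (s i < s j)%nat.

Definition scaled_sup_to_zero (s : nat -> nat) (f G : R -> R) : Prop :=
  forall eps, 0 < eps -> exists J, forall j, (J <= j)%nat ->
    forall x, -1 < x < 1 -> ~ is_node (s j) x ->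
      INR (s j) * Rabs (Bn (s j) f x - f x - G x / Dn (s j) x) <= eps.

From Stdlib Require Import Reals Lra Lia Psatz Classical.
Open Scope R_scope.

(* Write g_k = (f(x_k) - f(x)) / (x_k - x) and let T be the alternating sum of the
   g_k with halved end terms.  Then B_n(f) - f - G / D_n = - T / D_n, with G = O(f)
   for odd n and G = E(f) for even n, and |D_n| >= 2n/3 off the nodes.  Summation by
   parts and the mean value theorem, applied to T computed with the nodes moved
   towards x by a factor u in [0, 1], turn T into -1/2 times an alternating sum of
   increments of f' along an arithmetic progression in [-1, 1] with step at most 2/n.
   Such sums tend to 0 with the step for every absolutely continuous f' (a
   Riemann-Lebesgue lemma): they are O(step) for piecewise linear functions, and f'
   is approximated in variation by its piecewise linear interpolants on uniform grids,
   whose slopes converge in L^1 because their Huber energy is bounded and increases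
   under refinement by the Bregman divergences of the slopes. *)

Lemma rsum_ext F G m : (forall k, (k < m)%nat -> F k = G k) -> rsum F m = rsum G m.
Proof.
  induction m as [|m IH]; intros H; simpl; auto.
  rewrite IH by (intros; apply H; lia).
  rewrite H by lia; reflexivity.
Qed.

Lemma rsum_plus F G m : rsum (fun k => F k + G k) m = rsum F m + rsum G m.
Proof. induction m; simpl; lra. Qed.

Lemma rsum_minus F G m : rsum (fun k => F k - G k) m = rsum F m - rsum G m.
Proof. induction m; simpl; lra. Qed.

Lemma rsum_scal c F m : rsum (fun k => c * F k) m = c * rsum F m.
Proof. induction m; simpl; [ring|rewrite IHm; ring]. Qed.

Lemma rsum_const c m : rsum (fun _ => c) m = INR m * c.
Proof. induction m; simpl rsum; [simpl; ring|rewrite IHm, S_INR; ring]. Qed.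

Lemma rsum_le F G m : (forall k, (k < m)%nat -> F k <= G k) -> rsum F m <= rsum G m.
Proof.
  induction m as [|m IH]; intros H; simpl; [lra|].
  pose proof (H m ltac:(lia)). assert (rsum F m <= rsum G m) by (apply IH; auto).
  lra.
Qed.

Lemma rsum_nonneg F m : (forall k, (k < m)%nat -> 0 <= F k) -> 0 <= rsum F m.
Proof.
  intros H. replace 0 with (rsum (fun _ => 0) m) by (rewrite rsum_const; ring).
  now apply rsum_le.
Qed.

Lemma Rabs_rsum_le F m : Rabs (rsum F m) <= rsum (fun k => Rabs (F k)) m.
Proof.
  induction m; simpl; [rewrite Rabs_R0; lra|].
  eapply Rle_trans; [apply Rabs_triang|lra].
Qed.

Lemma rsum_succ_l F m : rsum F (S m) = F O + rsum (fun k => F (S k)) m.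
Proof. induction m; simpl in *; lra. Qed.

Lemma rsum_add_len F m p : rsum F (m + p) = rsum F m + rsum (fun k => F (m + k)%nat) p.
Proof.
  induction p; simpl; [rewrite Nat.add_0_r; ring|].
  rewrite Nat.add_succ_r; simpl; rewrite IHp; ring.
Qed.

Lemma rsum_blocks F p q :
  rsum F (p * q) = rsum (fun i => rsum (fun r => F (i * q + r)%nat) q) p.
Proof.
  induction p; simpl; [reflexivity|].
  rewrite Nat.add_comm, rsum_add_len, IHp; reflexivity.
Qed.

Lemma rsum_telescope G m : rsum (fun k => G (S k) - G k) m = G m - G O.
Proof. induction m; simpl; lra. Qed.

Lemma rsum_rev F m : rsum F m = rsum (fun i => F (m - 1 - i)%nat) m.
Proof.
  induction m as [|m IH]; [reflexivity|].
  rewrite (rsum_succ_l (fun i => F (S m - 1 - i)%nat)); simpl rsum.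
  rewrite IH, Rplus_comm; f_equal.
  - f_equal; lia.
  - apply rsum_ext; intros k Hk; f_equal; lia.
Qed.

Lemma rsum_if (b : bool) F m : rsum (fun k => if b then F k else 0) m = if b then rsum F m else 0.
Proof. destruct b; [reflexivity|rewrite rsum_const; ring]. Qed.

Lemma rsum_delta F m i : (i < m)%nat -> rsum (fun k => if Nat.eqb k i then F k else 0) m = F i.
Proof.
  induction m as [|m IH]; intros Hi; [lia|simpl].
  destruct (Nat.eq_dec i m) as [->|Hne].
  - rewrite Nat.eqb_refl, (rsum_ext _ (fun _ => 0)), rsum_const; [ring|].
    intros k Hk; destruct (Nat.eqb_spec k m); [lia|reflexivity].
  - rewrite IH by lia; destruct (Nat.eqb_spec m i); [lia|ring].
Qed.

Lemma pow_1_sqr k : (-1) ^ k * (-1) ^ k = 1.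
Proof. rewrite <- pow_add, <- pow_1_even with k; f_equal; lia. Qed.

Lemma alt_sum_decr_bounds (b : nat -> R) m :
  (forall i, 0 <= b i) -> (forall i, b (S i) <= b i) ->
  0 <= rsum (fun i => (-1) ^ i * b i) m <= b O /\
  ((1 <= m)%nat -> b O - b 1%nat <= rsum (fun i => (-1) ^ i * b i) m).
Proof.
  revert b; induction m as [|m IH]; intros b Hpos Hdecr.
  - pose proof (Hpos O); simpl; split; [lra|lia].
  - rewrite rsum_succ_l.
    rewrite (rsum_ext _ (fun k => -1 * ((-1) ^ k * b (S k)))) by (intros; simpl; ring).
    rewrite rsum_scal.
    destruct (IH (fun k => b (S k))) as [[H0 H1] _]; auto.
    pose proof (Hdecr O); pose proof (Hpos 1%nat); simpl pow.
    split; [split|intros]; lra.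
Qed.

Lemma Rabs_alt_sum_incr_le (e : nat -> R) m :
  (forall l, 0 <= e l) -> (forall l, e l <= e (S l)) ->
  Rabs (rsum (fun l => (-1) ^ l * e l) m) <= e (pred m).
Proof.
  intros Hpos Hincr. destruct m as [|m]; [simpl; rewrite Rabs_R0; apply Hpos|].
  rewrite rsum_rev.
  rewrite (rsum_ext _ (fun i => (-1) ^ m * ((-1) ^ i * e (m - i)%nat))).
  2:{ intros i Hi. replace (S m - 1 - i)%nat with (m - i)%nat by lia.
      replace ((-1) ^ m) with ((-1) ^ (m - i) * (-1) ^ i) by (rewrite <- pow_add; f_equal; lia).
      transitivity ((-1) ^ (m - i) * ((-1) ^ i * (-1) ^ i) * e (m - i)%nat);
        [rewrite pow_1_sqr|]; ring. }
  rewrite rsum_scal, Rabs_mult, pow_1_abs, Rmult_1_l.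
  destruct (alt_sum_decr_bounds (fun i => e (m - i)%nat) (S m)) as [[H0 H1] _]; auto.
  - intros i. destruct (Compare_dec.le_lt_dec m i).
    + replace (m - S i)%nat with (m - i)%nat by lia. lra.
    + replace (m - i)%nat with (S (m - S i)) by lia. apply Hincr.
  - rewrite Nat.sub_0_r in H1. rewrite Rabs_pos_eq; auto.
Qed.

Definition hinge c t := Rmax (t - c) 0.
Definition ramp c d t := Rmin (Rmax t c) d - c.

Section AlternatingIncrements.
Variables (z0 h : R) (m : nat).

Definition alt_incr (phi : R -> R) : R :=
  rsum (fun l => (-1) ^ l * (phi (z0 + INR (S l) * h) - phi (z0 + INR l * h))) m.

Lemma alt_incr_ext phi psi : (forall t, phi t = psi t) -> alt_incr phi = alt_incr psi.
Proof. intros H. apply rsum_ext. intros. rewrite !H. reflexivity. Qed.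

Lemma alt_incr_plus phi psi : alt_incr (fun t => phi t + psi t) = alt_incr phi + alt_incr psi.
Proof. unfold alt_incr. rewrite <- rsum_plus. apply rsum_ext. intros. ring. Qed.

Lemma alt_incr_minus phi psi : alt_incr (fun t => phi t - psi t) = alt_incr phi - alt_incr psi.
Proof. unfold alt_incr. rewrite <- rsum_minus. apply rsum_ext. intros. ring. Qed.

Lemma alt_incr_scal c phi : alt_incr (fun t => c * phi t) = c * alt_incr phi.
Proof. unfold alt_incr. rewrite <- rsum_scal. apply rsum_ext. intros. ring. Qed.

Lemma alt_incr_const c : alt_incr (fun _ => c) = 0.
Proof.
  unfold alt_incr. rewrite (rsum_ext _ (fun _ => 0)) by (intros; ring).
  rewrite rsum_const. ring.
Qed.

Lemma alt_incr_rsum (G : nat -> R -> R) N :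
  alt_incr (fun t => rsum (fun i => G i t) N) = rsum (fun i => alt_incr (G i)) N.
Proof.
  induction N; simpl; [apply alt_incr_const|].
  rewrite alt_incr_plus, IHN. reflexivity.
Qed.

Lemma Rabs_alt_incr_le_var phi :
  Rabs (alt_incr phi) <=
  rsum (fun l => Rabs (phi (z0 + INR (S l) * h) - phi (z0 + INR l * h))) m.
Proof.
  eapply Rle_trans; [apply Rabs_rsum_le|]. apply rsum_le. intros.
  rewrite Rabs_mult, pow_1_abs. lra.
Qed.

Lemma Rabs_alt_incr_le_sup phi kappa :
  (forall l, (l <= m)%nat -> Rabs (phi (z0 + INR l * h)) <= kappa) ->
  Rabs (alt_incr phi) <= 2 * INR m * kappa.
Proof.
  intros H. eapply Rle_trans; [apply Rabs_alt_incr_le_var|].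
  replace (2 * INR m * kappa) with (rsum (fun _ => 2 * kappa) m) by (rewrite rsum_const; ring).
  apply rsum_le. intros l Hl.
  eapply Rle_trans; [apply Rabs_triang|]. rewrite Rabs_Ropp.
  pose proof (H (S l) Hl). pose proof (H l ltac:(lia)). lra.
Qed.

Hypothesis h_nonneg : 0 <= h.

Lemma Rabs_alt_incr_hinge_le c : Rabs (alt_incr (hinge c)) <= h.
Proof.
  set (e := fun l => hinge c (z0 + INR (S l) * h) - hinge c (z0 + INR l * h)).
  assert (Hstep : forall l, z0 + INR (S l) * h = z0 + INR l * h + h)
    by (intros; rewrite S_INR; ring).
  assert (He : forall l, 0 <= e l <= h).
  { intros l. unfold e, hinge, Rmax. rewrite Hstep. repeat destruct Rle_dec; lra. }
  apply Rle_trans with (e (pred m)); [|apply He].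
  apply Rabs_alt_sum_incr_le; [apply He|].
  intros l. unfold e, hinge, Rmax. rewrite !Hstep. repeat destruct Rle_dec; lra.
Qed.

Lemma Rabs_alt_incr_ramp_le_step c d : c <= d -> Rabs (alt_incr (ramp c d)) <= 2 * h.
Proof.
  intros Hcd.
  rewrite (alt_incr_ext _ (fun t => hinge c t - hinge d t))
    by (intros; unfold ramp, hinge, Rmin, Rmax; repeat destruct Rle_dec; lra).
  rewrite alt_incr_minus.
  pose proof (Rabs_alt_incr_hinge_le c). pose proof (Rabs_alt_incr_hinge_le d).
  eapply Rle_trans; [apply Rabs_triang|]. rewrite Rabs_Ropp. lra.
Qed.

Lemma Rabs_alt_incr_ramp_le_width c d : c <= d -> Rabs (alt_incr (ramp c d)) <= d - c.
Proof.
  intros Hcd. eapply Rle_trans; [apply Rabs_alt_incr_le_var|].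
  rewrite (rsum_ext _ (fun l => ramp c d (z0 + INR (S l) * h) - ramp c d (z0 + INR l * h))).
  - rewrite (rsum_telescope (fun l => ramp c d (z0 + INR l * h))).
    unfold ramp, Rmin, Rmax. repeat destruct Rle_dec; lra.
  - intros l _. apply Rabs_pos_eq.
    assert (z0 + INR l * h <= z0 + INR (S l) * h) by (rewrite S_INR; nra).
    unfold ramp, Rmin, Rmax. repeat destruct Rle_dec; lra.
Qed.

End AlternatingIncrements.

Lemma ramp_split c e d t : c <= e -> e <= d -> ramp c d t = ramp c e t + ramp e d t.
Proof. intros. unfold ramp, Rmin, Rmax. repeat destruct Rle_dec; lra. Qed.

Lemma ramp_subdivide c l t p : 0 <= l ->
  ramp c (c + INR p * l) t = rsum (fun r => ramp (c + INR r * l) (c + INR (S r) * l) t) p.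
Proof.
  intros Hl. induction p.
  - simpl. unfold ramp, Rmin, Rmax. repeat destruct Rle_dec; lra.
  - cbn [rsum]. rewrite <- IHp. apply ramp_split.
    + pose proof (pos_INR p). nra.
    + rewrite S_INR. lra.
Qed.

Section Huber.
Variable M : R.
Hypothesis M_pos : 0 < M.

Definition huber s := if Rle_dec (Rabs s) M then s * s else 2 * M * Rabs s - M * M.
Definition huber_deriv s :=
  if Rle_dec (Rabs s) M then 2 * s else if Rle_dec 0 s then 2 * M else - (2 * M).
Definition huber_bregman x s := huber x - huber s - huber_deriv s * (x - s).

Lemma huber_bounds s : 0 <= huber s <= 2 * M * Rabs s.
Proof.
  unfold huber. pose proof (Rabs_pos s).
  destruct Rle_dec; [|nra].
  assert (Rabs s * Rabs s = s * s) by (unfold Rabs; destruct Rcase_abs; nra). nra.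
Qed.

Lemma huber_bregman_nonneg x s : 0 <= huber_bregman x s.
Proof.
  unfold huber_bregman, huber, huber_deriv.
  destruct (Rle_dec (Rabs x) M) as [H1|H1]; destruct (Rle_dec (Rabs s) M) as [H2|H2];
    try destruct (Rle_dec 0 s); revert H1 H2; unfold Rabs;
    destruct (Rcase_abs x); destruct (Rcase_abs s); intros;
    pose proof (Rle_0_sqr (x - s)); unfold Rsqr in *; nra.
Qed.

Lemma Rabs_sub_le_huber_bregman eta x s : Rabs s <= M / 2 -> 0 < eta <= M / 2 ->
  Rabs (x - s) <= eta + huber_bregman x s / eta.
Proof.
  intros Hs Heta.
  assert (eta * Rabs (x - s) <= eta * eta + huber_bregman x s).
  { unfold huber_bregman, huber, huber_deriv in *.
    destruct (Rle_dec (Rabs x) M) as [H1|H1]; destruct (Rle_dec (Rabs s) M) as [H2|H2];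
      try destruct (Rle_dec 0 s); revert H1 H2 Hs; unfold Rabs;
      destruct (Rcase_abs x); destruct (Rcase_abs s); destruct (Rcase_abs (x - s)); intros;
      pose proof (Rle_0_sqr (Rabs (x - s) - eta)); unfold Rsqr, Rabs in *;
      try destruct Rcase_abs; nra. }
  apply Rmult_le_reg_l with eta; [lra|].
  replace (eta * (eta + huber_bregman x s / eta)) with (eta * eta + huber_bregman x s)
    by (field; lra).
  lra.
Qed.

End Huber.

Lemma bounded_above_almost_max (u : nat -> R) U th : 0 < th -> (forall k, u k <= U) ->
  exists k, forall k', u k' <= u k + th.
Proof.
  intros Hth HU.
  destruct (completeness (fun x => exists k, x = u k)) as [L [Hub Hleast]].
  - exists U. intros x [k ->]. apply HU.
  - exists (u O). exists O. reflexivity.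
  - apply NNPP. intros Hno.
    assert (L <= L - th); [|lra].
    apply Hleast. intros x [k ->]. apply Rnot_lt_le. intros Hk. apply Hno.
    exists k. intros k'. assert (u k' <= L) by (apply Hub; exists k'; reflexivity). lra.
Qed.

Lemma ex_grid_cell (g : nat -> R) N t :
  (0 < N)%nat -> g O <= t <= g N -> exists i, (i < N)%nat /\ g i <= t <= g (S i).
Proof.
  induction N as [|N IH]; intros HN Ht; [lia|].
  destruct (Nat.eq_dec N 0) as [->|HN0]; [exists O; split; [lia|lra]|].
  destruct (Rle_dec t (g N)) as [Hle|Hgt].
  - destruct IH as [i [Hi Hit]]; [lia|lra|]. exists i. split; [lia|auto].
  - exists N. split; [lia|lra].
Qed.

Lemma INR_pos N : (0 < N)%nat -> 0 < INR N.
Proof. intros. apply lt_0_INR. lia. Qed.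

Section UniformGrid.
Variables (F : R -> R) (a b : R).
Hypothesis Hab : a < b.

Definition mesh N := (b - a) / INR N.
Definition gridpt N i := a + INR i * mesh N.
Definition incr N i := F (gridpt N (S i)) - F (gridpt N i).
Definition slope N i := incr N i / mesh N.
Definition interp N t :=
  F a + rsum (fun i => slope N i * ramp (gridpt N i) (gridpt N (S i)) t) N.

Lemma mesh_pos N : (0 < N)%nat -> 0 < mesh N.
Proof. intros. unfold mesh. apply Rdiv_lt_0_compat; [lra|now apply INR_pos]. Qed.

Lemma INR_mul_mesh N : (0 < N)%nat -> INR N * mesh N = b - a.
Proof. intros HN. unfold mesh. pose proof (INR_pos N HN). field. lra. Qed.

Lemma mesh_lt N d : (0 < N)%nat -> b - a < INR N * d -> mesh N < d.
Proof.
  intros HN H. unfold mesh. pose proof (INR_pos N HN).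
  apply Rmult_lt_reg_r with (INR N); auto.
  unfold Rdiv. rewrite Rmult_assoc, Rinv_l by lra. lra.
Qed.

Lemma gridpt_S N i : gridpt N (S i) = gridpt N i + mesh N.
Proof. unfold gridpt. rewrite S_INR. ring. Qed.

Lemma gridpt_le N i j : (0 < N)%nat -> (i <= j)%nat -> gridpt N i <= gridpt N j.
Proof. intros HN Hij. unfold gridpt. pose proof (mesh_pos N HN). apply le_INR in Hij. nra. Qed.

Lemma gridpt_0 N : gridpt N 0 = a.
Proof. unfold gridpt. simpl. ring. Qed.

Lemma gridpt_last N : (0 < N)%nat -> gridpt N N = b.
Proof. intros HN. unfold gridpt. rewrite INR_mul_mesh; auto. ring. Qed.

Lemma gridpt_in N i : (0 < N)%nat -> (i <= N)%nat -> a <= gridpt N i <= b.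
Proof.
  intros HN Hi. rewrite <- (gridpt_0 N), <- (gridpt_last N HN).
  split; apply gridpt_le; auto; lia.
Qed.

Lemma mesh_refine N q : (0 < N)%nat -> (0 < q)%nat -> mesh N = INR q * mesh (N * q).
Proof.
  intros HN Hq. unfold mesh. rewrite mult_INR.
  pose proof (INR_pos N HN). pose proof (INR_pos q Hq). field. lra.
Qed.

Lemma gridpt_refine N q i r : (0 < N)%nat -> (0 < q)%nat ->
  gridpt (N * q) (i * q + r) = gridpt N i + INR r * mesh (N * q).
Proof.
  intros HN Hq. unfold gridpt. rewrite (mesh_refine N q HN Hq), plus_INR, mult_INR. ring.
Qed.

Lemma mesh_mul_slope N i : (0 < N)%nat -> mesh N * slope N i = incr N i.
Proof. intros HN. unfold slope. pose proof (mesh_pos N HN). field. lra. Qed.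

Lemma mesh_mul_Rabs_slope N i : (0 < N)%nat -> mesh N * Rabs (slope N i) = Rabs (incr N i).
Proof.
  intros HN. rewrite <- (mesh_mul_slope N i HN), Rabs_mult, (Rabs_pos_eq (mesh N));
    [reflexivity|left; apply mesh_pos; auto].
Qed.

Lemma rsum_incr_refine N q i : (0 < N)%nat -> (0 < q)%nat ->
  rsum (fun r => incr (N * q) (i * q + r)) q = incr N i.
Proof.
  intros HN Hq. unfold incr.
  rewrite (rsum_ext _ (fun r => F (gridpt (N * q) (i * q + S r)) - F (gridpt (N * q) (i * q + r))))
    by (intros; do 3 f_equal; lia).
  rewrite (rsum_telescope (fun r => F (gridpt (N * q) (i * q + r)))), !gridpt_refine by auto.
  rewrite <- (mesh_refine N q HN Hq), <- gridpt_S. simpl INR. f_equal; f_equal; ring.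
Qed.

Lemma interp_on_cell N i t : (0 < N)%nat -> (i < N)%nat ->
  gridpt N i <= t <= gridpt N (S i) ->
  interp N t = F (gridpt N i) + slope N i * (t - gridpt N i).
Proof.
  intros HN Hi Ht. unfold interp. pose proof (mesh_pos N HN).
  set (G := fun k => slope N k * ramp (gridpt N k) (gridpt N (S k)) t).
  assert (Hramp : forall k, ramp (gridpt N k) (gridpt N (S k)) t =
            Rmin (Rmax t (gridpt N k)) (gridpt N k + mesh N) - gridpt N k)
    by (intros; unfold ramp; rewrite gridpt_S; reflexivity).
  assert (Hbelow : forall k, (k <= i)%nat -> rsum G k = F (gridpt N k) - F a).
  { induction k; intros Hk; simpl; [rewrite gridpt_0; ring|].
    rewrite IHk by lia. unfold G. rewrite Hramp.
    assert (gridpt N (S k) <= gridpt N i) by (apply gridpt_le; auto).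
    replace (Rmin (Rmax t (gridpt N k)) (gridpt N k + mesh N) - gridpt N k) with (mesh N)
      by (rewrite gridpt_S in *; unfold Rmin, Rmax; repeat destruct Rle_dec; lra).
    rewrite Rmult_comm, mesh_mul_slope by auto. unfold incr. ring. }
  assert (Habove : forall d, (i + S d <= N)%nat ->
            rsum G (i + S d) = F (gridpt N i) - F a + slope N i * (t - gridpt N i)).
  { induction d; intros Hd.
    - rewrite Nat.add_1_r. simpl. rewrite Hbelow by lia. unfold G. rewrite Hramp.
      replace (Rmin (Rmax t (gridpt N i)) (gridpt N i + mesh N) - gridpt N i) with (t - gridpt N i)
        by (rewrite gridpt_S in *; unfold Rmin, Rmax; repeat destruct Rle_dec; lra).
      ring.
    - replace (i + S (S d))%nat with (S (i + S d)) by lia. simpl.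
      rewrite IHd by lia. unfold G. rewrite Hramp.
      assert (gridpt N (S i) <= gridpt N (i + S d)) by (apply gridpt_le; auto; lia).
      replace (Rmin (Rmax t (gridpt N (i + S d))) (gridpt N (i + S d) + mesh N)
               - gridpt N (i + S d)) with 0 by (unfold Rmin, Rmax; repeat destruct Rle_dec; lra).
      ring. }
  fold G. replace (rsum G N) with (rsum G (i + S (N - S i))) by (f_equal; lia).
  rewrite Habove by lia. ring.
Qed.

Lemma interp_refine_diff N q t : (0 < N)%nat -> (0 < q)%nat ->
  interp (N * q) t - interp N t =
  rsum (fun i => rsum (fun r => (slope (N * q) (i * q + r) - slope N i) *
    ramp (gridpt (N * q) (i * q + r)) (gridpt (N * q) (S (i * q + r))) t) q) N.
Proof.
  intros HN Hq. unfold interp. rewrite rsum_blocks.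
  assert (Hsplit : forall i, slope N i * ramp (gridpt N i) (gridpt N (S i)) t =
      rsum (fun r => slope N i *
        ramp (gridpt (N * q) (i * q + r)) (gridpt (N * q) (S (i * q + r))) t) q).
  { intros i. rewrite rsum_scal, gridpt_S, (mesh_refine N q HN Hq).
    rewrite (ramp_subdivide (gridpt N i) (mesh (N * q)) t) by (left; apply mesh_pos; lia).
    f_equal. apply rsum_ext. intros r _. rewrite <- Nat.add_succ_r, !gridpt_refine by auto.
    reflexivity. }
  rewrite (rsum_ext (fun i => slope N i * ramp (gridpt N i) (gridpt N (S i)) t) _ N
             (fun i _ => Hsplit i)).
  match goal with |- F a + ?A - (F a + ?B) = _ =>
    replace (F a + A - (F a + B)) with (A - B) by ring end.
  rewrite <- rsum_minus. apply rsum_ext. intros i _. rewrite <- rsum_minus.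
  apply rsum_ext. intros. ring.
Qed.

Definition huber_energy M N := rsum (fun i => mesh N * huber M (slope N i)) N.

Definition slope_dev N q i :=
  rsum (fun r => mesh (N * q) * Rabs (slope (N * q) (i * q + r) - slope N i)) q.

Definition bregman_gap M N q i :=
  rsum (fun r => mesh (N * q) * huber_bregman M (slope (N * q) (i * q + r)) (slope N i)) q.

Definition steep M N i : bool := if Rle_dec (Rabs (slope N i)) (M / 2) then false else true.

Lemma huber_energy_refine M N q : (0 < N)%nat -> (0 < q)%nat ->
  huber_energy M (N * q) - huber_energy M N = rsum (bregman_gap M N q) N.
Proof.
  intros HN Hq. unfold huber_energy. rewrite rsum_blocks, <- rsum_minus.
  apply rsum_ext. intros i _. unfold bregman_gap, huber_bregman.
  set (s := slope N i). symmetry.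
  rewrite (rsum_ext _ (fun r => mesh (N * q) * huber M (slope (N * q) (i * q + r))
        - mesh (N * q) * huber M s
        - huber_deriv M s * (incr (N * q) (i * q + r) - mesh (N * q) * s))).
  2:{ intros r _. rewrite <- (mesh_mul_slope (N * q)) by lia. ring. }
  rewrite !rsum_minus, (rsum_scal (huber_deriv M s)), rsum_minus, !rsum_const,
    rsum_incr_refine by auto.
  unfold s. rewrite <- (mesh_mul_slope N), (mesh_refine N q) by auto.
  ring.
Qed.

Lemma huber_energy_le M N : 0 < M -> (0 < N)%nat ->
  huber_energy M N <= 2 * M * rsum (fun i => Rabs (incr N i)) N.
Proof.
  intros HM HN. unfold huber_energy. rewrite <- rsum_scal. apply rsum_le. intros i _.
  rewrite <- (mesh_mul_Rabs_slope N i HN).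
  pose proof (mesh_pos N HN). pose proof (huber_bounds M HM (slope N i)). nra.
Qed.

Lemma slope_dev_le_bregman M eta N q i : 0 < M -> (0 < N)%nat -> (0 < q)%nat ->
  Rabs (slope N i) <= M / 2 -> 0 < eta <= M / 2 ->
  slope_dev N q i <= eta * mesh N + bregman_gap M N q i / eta.
Proof.
  intros HM HN Hq Hs Heta. pose proof (mesh_pos (N * q) ltac:(lia)).
  unfold slope_dev, bregman_gap.
  set (gap := fun r => huber_bregman M (slope (N * q) (i * q + r)) (slope N i)).
  apply Rle_trans with (rsum (fun r => mesh (N * q) * (eta + gap r / eta)) q).
  - apply rsum_le. intros r _. apply Rmult_le_compat_l; [lra|].
    apply Rabs_sub_le_huber_bregman; auto.
  - right. rewrite (rsum_ext _ (fun r => eta * mesh (N * q) + / eta * (mesh (N * q) * gap r)))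
      by (intros; field; lra).
    rewrite rsum_plus, rsum_const, rsum_scal, (mesh_refine N q HN Hq).
    unfold gap, Rdiv. ring.
Qed.

Lemma slope_dev_le_var N q i : (0 < N)%nat -> (0 < q)%nat ->
  slope_dev N q i <= 2 * rsum (fun r => Rabs (incr (N * q) (i * q + r))) q.
Proof.
  intros HN Hq. pose proof (mesh_pos (N * q) ltac:(lia)).
  assert (Hcoarse : Rabs (incr N i) <= rsum (fun r => Rabs (incr (N * q) (i * q + r))) q)
    by (rewrite <- (rsum_incr_refine N q i HN Hq); apply Rabs_rsum_le).
  apply Rle_trans with
    (rsum (fun r => Rabs (incr (N * q) (i * q + r)) + mesh (N * q) * Rabs (slope N i)) q).
  - apply rsum_le. intros r _. rewrite <- (mesh_mul_slope (N * q)) by lia.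
    rewrite Rabs_mult, (Rabs_pos_eq (mesh (N * q))), <- Rmult_plus_distr_l by lra.
    apply Rmult_le_compat_l; [lra|].
    eapply Rle_trans; [apply Rabs_triang|]. rewrite Rabs_Ropp. lra.
  - rewrite rsum_plus, rsum_const, <- Rmult_assoc, <- (mesh_refine N q HN Hq),
      mesh_mul_Rabs_slope by auto.
    lra.
Qed.

Lemma steep_length_le M N : 0 < M -> (0 < N)%nat ->
  rsum (fun i => if steep M N i then mesh N else 0) N <=
  2 / M * rsum (fun i => Rabs (incr N i)) N.
Proof.
  intros HM HN. pose proof (mesh_pos N HN).
  rewrite <- rsum_scal. apply rsum_le. intros i _. unfold steep.
  rewrite <- (mesh_mul_Rabs_slope N i HN).
  destruct Rle_dec as [Hs|Hs].
  - apply Rmult_le_pos; [unfold Rdiv; apply Rmult_le_pos; [lra|left; apply Rinv_0_lt_compat; lra]|].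
    apply Rmult_le_pos; [lra|apply Rabs_pos].
  - apply Rnot_le_lt in Hs.
    replace (2 / M * (mesh N * Rabs (slope N i))) with (mesh N * (Rabs (slope N i) / (M / 2)))
      by (field; lra).
    rewrite <- (Rmult_1_r (mesh N)) at 1. apply Rmult_le_compat_l; [lra|].
    apply Rmult_le_reg_r with (M / 2); [lra|].
    replace (Rabs (slope N i) / (M / 2) * (M / 2)) with (Rabs (slope N i)) by (field; lra).
    lra.
Qed.

Lemma rsum_slope_dev_le M eta N q : 0 < M -> (0 < N)%nat -> (0 < q)%nat -> 0 < eta <= M / 2 ->
  rsum (slope_dev N q) N <=
  eta * (b - a) + / eta * rsum (bregman_gap M N q) N +
  2 * rsum (fun i => if steep M N i
                     then rsum (fun r => Rabs (incr (N * q) (i * q + r))) q else 0) N.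
Proof.
  intros HM HN Hq Heta.
  replace (eta * (b - a)) with (rsum (fun _ => eta * mesh N) N)
    by (rewrite rsum_const, <- (INR_mul_mesh N HN); ring).
  rewrite <- !rsum_scal, <- !rsum_plus. apply rsum_le. intros i _.
  assert (0 <= / eta * bregman_gap M N q i).
  { apply Rmult_le_pos; [left; apply Rinv_0_lt_compat; lra|].
    apply rsum_nonneg. intros r _. apply Rmult_le_pos; [left; apply mesh_pos; lia|].
    apply huber_bregman_nonneg; auto. }
  pose proof (mesh_pos N HN). unfold steep. destruct Rle_dec as [Hs|Hs].
  - pose proof (slope_dev_le_bregman M eta N q i HM HN Hq Hs Heta). unfold Rdiv in *. lra.
  - pose proof (slope_dev_le_var N q i HN Hq). nra.
Qed.

Lemma Rabs_alt_incr_interp_le z0 h m N : 0 <= h -> (0 < N)%nat ->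
  Rabs (alt_incr z0 h m (interp N)) <= 2 * h * rsum (fun i => Rabs (slope N i)) N.
Proof.
  intros Hh HN. unfold interp.
  rewrite alt_incr_plus, alt_incr_const, Rplus_0_l, alt_incr_rsum.
  eapply Rle_trans; [apply Rabs_rsum_le|].
  rewrite <- rsum_scal. apply rsum_le. intros i Hi.
  rewrite alt_incr_scal, Rabs_mult.
  pose proof (Rabs_alt_incr_ramp_le_step z0 h m Hh (gridpt N i) (gridpt N (S i))
    (gridpt_le N i (S i) HN ltac:(lia))).
  pose proof (Rabs_pos (slope N i)). nra.
Qed.

Lemma Rabs_alt_incr_interp_refine_le z0 h m N q : 0 <= h -> (0 < N)%nat -> (0 < q)%nat ->
  Rabs (alt_incr z0 h m (fun t => interp (N * q) t - interp N t)) <= rsum (slope_dev N q) N.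
Proof.
  intros Hh HN Hq.
  rewrite (alt_incr_ext _ _ _ _ _ (fun t => interp_refine_diff N q t HN Hq)), alt_incr_rsum.
  eapply Rle_trans; [apply Rabs_rsum_le|]. apply rsum_le. intros i _.
  rewrite alt_incr_rsum. eapply Rle_trans; [apply Rabs_rsum_le|]. apply rsum_le. intros r _.
  rewrite alt_incr_scal, Rabs_mult, (Rmult_comm (mesh _)).
  apply Rmult_le_compat_l; [apply Rabs_pos|].
  eapply Rle_trans; [apply Rabs_alt_incr_ramp_le_width; auto|].
  - apply gridpt_le; lia.
  - rewrite gridpt_S. lra.
Qed.

Hypothesis HAC : abs_cont_on F a b.

Lemma abs_cont_unif_cont kappa : 0 < kappa -> exists d, 0 < d /\
  forall u v, a <= u <= b -> a <= v <= b -> Rabs (u - v) < d -> Rabs (F u - F v) < kappa.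
Proof.
  intros Hk. destruct (HAC kappa Hk) as [d [Hd Hac]]. exists d. split; auto.
  intros u v Hu Hv Huv.
  assert (Hone : forall x y, a <= x <= y -> y <= b -> y - x < d -> Rabs (F y - F x) < kappa).
  { intros x y Hxy Hy Hlen. specialize (Hac 1%nat (fun _ => x) (fun _ => y)). simpl in Hac.
    rewrite !Rplus_0_l in Hac. apply Hac; intros; lra || lia. }
  destruct (Rle_dec u v).
  - rewrite Rabs_minus_sym. apply Hone; try lra. rewrite Rabs_minus_sym, Rabs_pos_eq in Huv; lra.
  - apply Hone; try lra. rewrite Rabs_pos_eq in Huv; lra.
Qed.

Lemma interp_approx kappa : 0 < kappa -> exists N0, (0 < N0)%nat /\ forall N, (N0 <= N)%nat ->
  forall t, a <= t <= b -> Rabs (interp N t - F t) <= kappa.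
Proof.
  intros Hk. destruct (abs_cont_unif_cont kappa Hk) as [d [Hd Hunif]].
  destruct (INR_archimed d (b - a) Hd) as [N0 HN0].
  exists (S N0). split; [lia|]. intros N HN t Ht.
  assert (HNpos : (0 < N)%nat) by lia.
  assert (Hmesh : mesh N < d).
  { apply mesh_lt; auto. apply le_INR in HN. rewrite S_INR in HN. nra. }
  destruct (ex_grid_cell (gridpt N) N t HNpos) as [i [Hi Hit]];
    [rewrite gridpt_0, gridpt_last; auto|].
  rewrite (interp_on_cell N i t HNpos Hi Hit).
  pose proof (mesh_pos N HNpos). pose proof (gridpt_S N i).
  pose proof (gridpt_in N i HNpos ltac:(lia)). pose proof (gridpt_in N (S i) HNpos ltac:(lia)).
  set (th := (t - gridpt N i) / mesh N).
  assert (Hth : 0 <= th <= 1).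
  { unfold th, Rdiv. split; [apply Rmult_le_pos; [lra|left; apply Rinv_0_lt_compat; lra]|].
    apply Rmult_le_reg_r with (mesh N); auto. rewrite Rmult_assoc, Rinv_l; lra. }
  assert (Hconv : F (gridpt N i) + slope N i * (t - gridpt N i) - F t =
                (1 - th) * (F (gridpt N i) - F t) + th * (F (gridpt N (S i)) - F t))
    by (unfold th, slope, incr; field; lra).
  rewrite Hconv.
  assert (HA : Rabs (F (gridpt N i) - F t) < kappa)
    by (apply Hunif; try lra; rewrite Rabs_left1; lra).
  assert (HB : Rabs (F (gridpt N (S i)) - F t) < kappa)
    by (apply Hunif; try lra; rewrite Rabs_pos_eq; lra).
  eapply Rle_trans; [apply Rabs_triang|]. rewrite !Rabs_mult.
  rewrite (Rabs_pos_eq th), (Rabs_pos_eq (1 - th)) by lra. nra.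
Qed.

Lemma ac_grid_blocks eps : 0 < eps -> exists delta, 0 < delta /\
  forall N q (p : nat -> bool), (0 < N)%nat -> (0 < q)%nat ->
  rsum (fun i => if p i then mesh N else 0) N < delta ->
  rsum (fun i => if p i then rsum (fun r => Rabs (incr (N * q) (i * q + r))) q else 0) N < eps.
Proof.
  intros Heps. destruct (HAC eps Heps) as [delta [Hdelta Hac]]. exists delta. split; auto.
  intros N q p HN Hq Hlen. pose proof (mesh_pos (N * q) ltac:(lia)).
  set (u := gridpt (N * q)).
  set (v := fun k => if p (k / q)%nat then gridpt (N * q) (S k) else gridpt (N * q) k).
  assert (Hblocks : forall X : nat -> R,
    rsum (fun k => if p (k / q)%nat then X k else 0) (N * q) =
    rsum (fun i => if p i then rsum (fun r => X (i * q + r)%nat) q else 0) N).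
  { intros X. rewrite rsum_blocks. apply rsum_ext. intros i _. rewrite <- rsum_if.
    apply rsum_ext. intros r Hr.
    replace ((i * q + r) / q)%nat with i; [reflexivity|].
    rewrite Nat.div_add_l, Nat.div_small by lia. lia. }
  assert (Hv : forall k, v k - u k = if p (k / q)%nat then mesh (N * q) else 0).
  { intros k. unfold u, v. destruct (p _); [rewrite gridpt_S|]; ring. }
  assert (Hvu : forall k, u k <= v k <= gridpt (N * q) (S k)).
  { intros k. unfold u, v. rewrite gridpt_S. destruct (p _); lra. }
  rewrite <- (Hblocks (fun k => Rabs (incr (N * q) k))).
  rewrite (rsum_ext _ (fun k => Rabs (F (v k) - F (u k)))).
  2:{ intros k _. unfold u, v, incr. destruct (p _); [reflexivity|].
      replace (F (gridpt (N * q) k) - F (gridpt (N * q) k)) with 0 by ring.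
      rewrite Rabs_R0. reflexivity. }
  apply Hac.
  - intros k Hk. pose proof (Hvu k). unfold u in *.
    pose proof (gridpt_in (N * q) k ltac:(lia) ltac:(lia)).
    pose proof (gridpt_in (N * q) (S k) ltac:(lia) ltac:(lia)). repeat split; lra.
  - intros i j Hi Hj Hij. pose proof (Hvu i). pose proof (Hvu j). unfold u in *.
    destruct (Nat.lt_ge_cases i j); [left|right].
    + apply Rle_trans with (gridpt (N * q) (S i)); [lra|apply gridpt_le; lia].
    + apply Rle_trans with (gridpt (N * q) (S j)); [lra|apply gridpt_le; lia].
  - rewrite (rsum_ext _ _ _ (fun k _ => Hv k)), Hblocks.
    erewrite rsum_ext; [exact Hlen|]. intros i _.
    rewrite rsum_const, <- (mesh_refine N q HN Hq). reflexivity.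
Qed.

Lemma grid_variation_bounded : exists N0, (0 < N0)%nat /\ forall q, (0 < q)%nat ->
  rsum (fun k => Rabs (incr (N0 * q) k)) (N0 * q) <= INR N0.
Proof.
  destruct (ac_grid_blocks 1 Rlt_0_1) as [delta [Hdelta Hblk]].
  destruct (INR_archimed delta (b - a) Hdelta) as [N HN].
  exists (S N). split; [lia|]. intros q Hq.
  assert (Hmesh : mesh (S N) < delta).
  { apply mesh_lt; [lia|]. rewrite S_INR. lra. }
  rewrite rsum_blocks, <- (Rmult_1_r (INR (S N))), <- rsum_const.
  apply rsum_le. intros i Hi. left.
  specialize (Hblk (S N) q (fun i' => Nat.eqb i' i) ltac:(lia) Hq).
  cbv beta in Hblk. rewrite (rsum_delta (fun _ => mesh (S N))), rsum_delta in Hblk by auto.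
  auto.
Qed.

Lemma slope_dev_small eps : 0 < eps -> exists N, (0 < N)%nat /\
  forall q, (0 < q)%nat -> rsum (slope_dev N q) N <= eps.
Proof.
  intros Heps. set (e := eps / 4).
  destruct (ac_grid_blocks e) as [delta [Hdelta Hblk]]; [unfold e; lra|].
  destruct grid_variation_bounded as [N0 [HN0 Hvar]].
  set (W := INR N0). assert (HW : 0 < W) by (apply INR_pos; auto).
  set (eta := e / (b - a)). assert (Heta : 0 < eta) by (apply Rdiv_lt_0_compat; unfold e; lra).
  set (M := 2 * eta + 2 * W / delta + 1).
  assert (HWd : 0 < 2 * W / delta) by (apply Rdiv_lt_0_compat; lra).
  assert (HM : 0 < M) by (unfold M; lra).
  assert (Hsteep_len : 2 / M * W < delta).
  { apply Rmult_lt_reg_r with M; auto.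
    replace (2 / M * W * M) with (2 * W) by (field; lra).
    unfold M. replace (delta * (2 * eta + 2 * W / delta + 1)) with (2 * delta * eta + 2 * W + delta)
      by (field; lra).
    nra. }
  (* The Huber energy increases by the Bregman gaps under refinement and stays bounded,
     so past an almost maximal grid the gaps of all further refinements are small. *)
  destruct (bounded_above_almost_max (fun k => huber_energy M (N0 * S k)) (2 * M * W) (eta * e))
    as [k Hk].
  { unfold e. nra. }
  { intros k. eapply Rle_trans; [apply huber_energy_le; auto; lia|].
    apply Rmult_le_compat_l; [lra|]. apply Hvar. lia. }
  set (N := (N0 * S k)%nat). assert (HN : (0 < N)%nat) by (unfold N; lia).
  exists N. split; auto. intros q Hq.
  assert (Hgap : rsum (bregman_gap M N q) N <= eta * e).
  { rewrite <- huber_energy_refine by auto.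
    specialize (Hk (S k * q - 1)%nat). cbv beta in Hk.
    replace (S (S k * q - 1)) with (S k * q)%nat in Hk by nia.
    rewrite Nat.mul_assoc in Hk. fold N in Hk. lra. }
  assert (Hsteep : rsum (fun i => if steep M N i
                     then rsum (fun r => Rabs (incr (N * q) (i * q + r))) q else 0) N < e).
  { apply Hblk; auto. eapply Rle_lt_trans; [apply steep_length_le; auto|].
    eapply Rle_lt_trans; [|exact Hsteep_len]. apply Rmult_le_compat_l.
    - unfold Rdiv. apply Rmult_le_pos; [lra|left; apply Rinv_0_lt_compat; auto].
    - apply Hvar. lia. }
  eapply Rle_trans; [apply (rsum_slope_dev_le M eta N q); auto; unfold M; lra|].
  assert (eta * (b - a) = e) by (unfold eta; field; lra).
  assert (/ eta * rsum (bregman_gap M N q) N <= e).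
  { apply Rmult_le_reg_l with eta; auto. rewrite <- Rmult_assoc, Rinv_r by lra. lra. }
  unfold e in *. lra.
Qed.

Theorem alt_incr_abs_cont_small eps : 0 < eps -> exists eta, 0 < eta /\
  forall z0 h m, 0 <= h <= eta -> a <= z0 -> z0 + INR m * h <= b ->
  Rabs (alt_incr z0 h m F) <= eps.
Proof.
  intros Heps. set (e := eps / 3).
  destruct (slope_dev_small e) as [N [HN Hdev]]; [unfold e; lra|].
  set (var := rsum (fun i => Rabs (slope N i)) N).
  assert (Hvar : 0 <= var) by (apply rsum_nonneg; intros; apply Rabs_pos).
  exists (e / (2 * var + 1)). split; [apply Rdiv_lt_0_compat; unfold e; lra|].
  intros z0 h m Hh Hz0 Hzm.
  assert (Hgrid : forall l, (l <= m)%nat -> a <= z0 + INR l * h <= b).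
  { intros l Hl. apply le_INR in Hl. pose proof (pos_INR l). split; nra. }
  set (kappa := e / (2 * INR m + 1)).
  assert (Hk : 0 < kappa) by (pose proof (pos_INR m); apply Rdiv_lt_0_compat; unfold e; lra).
  destruct (interp_approx kappa Hk) as [N1 [HN1 Happ]].
  rewrite (alt_incr_ext z0 h m F (fun t => (F t - interp (N * N1) t) +
             (interp (N * N1) t - interp N t) + interp N t)) by (intros; ring).
  rewrite !alt_incr_plus.
  assert (Hfine : Rabs (alt_incr z0 h m (fun t => F t - interp (N * N1) t)) <= e).
  { eapply Rle_trans; [apply (Rabs_alt_incr_le_sup z0 h m _ kappa)|].
    - intros l Hl. rewrite Rabs_minus_sym. apply Happ; [nia|auto].
    - unfold kappa. pose proof (pos_INR m).
      replace (2 * INR m * (e / (2 * INR m + 1))) with (e - e / (2 * INR m + 1)) by (field; lra).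
      assert (0 < e / (2 * INR m + 1)) by (apply Rdiv_lt_0_compat; unfold e; lra). lra. }
  assert (Hrefine : Rabs (alt_incr z0 h m (fun t => interp (N * N1) t - interp N t)) <= e)
    by (eapply Rle_trans; [apply Rabs_alt_incr_interp_refine_le|apply Hdev]; lra || auto).
  assert (Hcoarse : Rabs (alt_incr z0 h m (interp N)) <= e).
  { eapply Rle_trans; [apply Rabs_alt_incr_interp_le; lra || auto|]. fold var.
    assert (h * (2 * var + 1) <= e).
    { destruct Hh as [_ Hh]. apply Rmult_le_compat_r with (r := 2 * var + 1) in Hh; [|lra].
      replace (e / (2 * var + 1) * (2 * var + 1)) with e in Hh by (field; lra). lra. }
    nra. }
  eapply Rle_trans; [apply Rabs_triang|].
  eapply Rle_trans; [apply Rplus_le_compat_r; apply Rabs_triang|].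
  unfold e in *. lra.
Qed.

End UniformGrid.

Definition alt_sum_half_ends (G : nat -> R) n :=
  rsum (fun k => (-1) ^ k * G k) (S n) - (G O + (-1) ^ n * G n) / 2.

Lemma alt_sum_half_ends_by_parts (G : nat -> R) n :
  alt_sum_half_ends G n = - (1 / 2) * rsum (fun l => (-1) ^ l * (G (S l) - G l)) n.
Proof.
  unfold alt_sum_half_ends. induction n as [|n IH]; [simpl; field|].
  change (rsum (fun k => (-1) ^ k * G k) (S (S n))) with
    (rsum (fun k => (-1) ^ k * G k) (S n) + (-1) ^ S n * G (S n)).
  change (rsum (fun l => (-1) ^ l * (G (S l) - G l)) (S n)) with
    (rsum (fun l => (-1) ^ l * (G (S l) - G l)) n + (-1) ^ n * (G (S n) - G n)).
  replace (rsum (fun k => (-1) ^ k * G k) (S n)) with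
    (- (1 / 2) * rsum (fun l => (-1) ^ l * (G (S l) - G l)) n + (G O + (-1) ^ n * G n) / 2)
    by (rewrite <- IH; ring).
  simpl pow. field.
Qed.

Lemma alt_recip_bounds s h p : 0 < s -> 0 < h ->
  0 <= rsum (fun i => (-1) ^ i / (s + INR i * h)) p /\
  ((1 <= p)%nat -> / s - / (s + h) <= rsum (fun i => (-1) ^ i / (s + INR i * h)) p).
Proof.
  intros Hs Hh.
  assert (Hden : forall i, 0 < s + INR i * h) by (intros i; pose proof (pos_INR i); nra).
  destruct (alt_sum_decr_bounds (fun i => / (s + INR i * h)) p) as [[H0 _] H1].
  - intros i. left. apply Rinv_0_lt_compat, Hden.
  - intros i. apply Rinv_le_contravar; [apply Hden|]. rewrite S_INR. lra.
  - simpl INR in H1. rewrite Rmult_0_l, Rplus_0_r, Rmult_1_l in H1. split; auto.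
Qed.

Lemma recip_gap_ge s h : 0 < s <= h / 2 -> 4 / (3 * h) <= / s - / (s + h).
Proof.
  intros Hs. assert (Hp : 0 < s * (s + h)) by nra.
  replace (/ s - / (s + h)) with (h / (s * (s + h))) by (field; lra).
  apply Rmult_le_reg_r with (3 * h * (s * (s + h))); [nra|].
  replace (4 / (3 * h) * (3 * h * (s * (s + h)))) with (4 * (s * (s + h))) by (field; lra).
  replace (h / (s * (s + h)) * (3 * h * (s * (s + h)))) with (3 * h * h) by (field; lra).
  nra.
Qed.

Section Berrut.
Variable n : nat.
Hypothesis Hn : (0 < n)%nat.

Local Notation h := (mesh (-1) 1 n).

Lemma node_gridpt k : node n k = gridpt (-1) 1 n k.
Proof. unfold node, gridpt, mesh. pose proof (INR_pos n Hn). field. lra. Qed.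

Lemma node_0 : node n 0 = -1.
Proof. rewrite node_gridpt. apply gridpt_0. Qed.

Lemma node_last : node n n = 1.
Proof. rewrite node_gridpt. apply gridpt_last; auto. Qed.

Lemma node_in k : (k <= n)%nat -> -1 <= node n k <= 1.
Proof. intros. rewrite node_gridpt. apply gridpt_in; auto; lra. Qed.

Lemma sub_node_neq0 x k : ~ is_node n x -> (k <= n)%nat -> x - node n k <> 0.
Proof. intros Hx Hk E. apply Hx. exists k. split; auto. lra. Qed.

Lemma Bn_not_node f x : ~ is_node n x -> Bn n f x = Nn n f x / Dn n x.
Proof.
  intros Hx. unfold Bn.
  assert (Hnone : forall m, (m <= S n)%nat -> node_index n x m = None).
  { induction m; intros Hm; simpl; auto.
    rewrite IHm by lia. destruct (Req_EM_T x (node n m)); auto.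
    exfalso. apply Hx. exists m. split; [lia|auto]. }
  rewrite Hnone; auto.
Qed.

Lemma Dn_split j t : (j < n)%nat -> 0 < t < h ->
  Dn n (node n j + t) =
  (-1) ^ j * (rsum (fun i => (-1) ^ i / (t + INR i * h)) (S j) +
              rsum (fun i => (-1) ^ i / ((h - t) + INR i * h)) (n - j)).
Proof.
  intros Hj Ht. unfold Dn.
  replace (S n) with (S j + (n - j))%nat by lia.
  rewrite rsum_add_len, Rmult_plus_distr_l, <- !rsum_scal. f_equal.
  - rewrite rsum_rev. apply rsum_ext. intros i Hi.
    replace (S j - 1 - i)%nat with (j - i)%nat by lia.
    replace (node n j + t - node n (j - i)) with (t + INR i * h)
      by (rewrite !node_gridpt; unfold gridpt; rewrite minus_INR by lia; ring).
    replace ((-1) ^ j) with ((-1) ^ (j - i) * (-1) ^ i) by (rewrite <- pow_add; f_equal; lia).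
    replace ((-1) ^ (j - i) / (t + INR i * h))
      with ((-1) ^ (j - i) * ((-1) ^ i * (-1) ^ i) / (t + INR i * h))
      by (rewrite pow_1_sqr, Rmult_1_r; reflexivity).
    unfold Rdiv. ring.
  - apply rsum_ext. intros i Hi.
    replace (node n j + t - node n (S j + i)) with (- ((h - t) + INR i * h))
      by (rewrite !node_gridpt; unfold gridpt; rewrite plus_INR, S_INR; ring).
    rewrite pow_add. simpl pow. pose proof (pos_INR i). field. nra.
Qed.

Lemma Dn_abs_ge x : -1 < x < 1 -> ~ is_node n x -> 2 * INR n / 3 <= Rabs (Dn n x).
Proof.
  intros Hx Hnode. pose proof (mesh_pos (-1) 1 ltac:(lra) n Hn).
  destruct (ex_grid_cell (node n) n x Hn) as [j [Hj [Hlo Hhi]]]; [rewrite node_0, node_last; lra|].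
  assert (Hlo' : node n j < x)
    by (destruct Hlo; auto; exfalso; apply Hnode; exists j; split; [lia|auto]).
  assert (Hhi' : x < node n (S j))
    by (destruct Hhi; auto; exfalso; apply Hnode; exists (S j); split; [lia|auto]).
  set (t := x - node n j).
  assert (Ht : 0 < t < h) by (unfold t; rewrite !node_gridpt, gridpt_S in *; lra).
  replace x with (node n j + t) by (unfold t; ring).
  rewrite (Dn_split j t Hj Ht), Rabs_mult, pow_1_abs, Rmult_1_l.
  destruct (alt_recip_bounds t h (S j)) as [HL0 HL1]; try lra.
  destruct (alt_recip_bounds (h - t) h (n - j)) as [HR0 HR1]; try lra.
  specialize (HL1 ltac:(lia)). specialize (HR1 ltac:(lia)).
  rewrite Rabs_pos_eq by lra.
  assert (Hnh : INR n * h = 2) by (rewrite INR_mul_mesh; auto; ring).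
  replace (2 * INR n / 3) with (4 / (3 * h))
    by (replace 4 with (2 * (INR n * h)) by (rewrite Hnh; ring); field; lra).
  (* Both alternating sums are nonnegative, and the one whose first node lies within
     [h / 2] of [x] exceeds [4 / (3 * h)]. *)
  destruct (Rle_dec t (h / 2)).
  - pose proof (recip_gap_ge t h ltac:(lra)). lra.
  - pose proof (recip_gap_ge (h - t) h ltac:(lra)). lra.
Qed.

Lemma Dn_neq0 x : -1 < x < 1 -> ~ is_node n x -> Dn n x <> 0.
Proof.
  intros Hx Hnode E. pose proof (Dn_abs_ge x Hx Hnode). pose proof (INR_pos n Hn).
  rewrite E, Rabs_R0 in *. lra.
Qed.

Definition divdiff f x k := (f (node n k) - f x) / (node n k - x).

Lemma Bn_sub_eq f x : -1 < x < 1 -> ~ is_node n x ->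
  Bn n f x - f x =
  - (alt_sum_half_ends (divdiff f x) n + (divdiff f x O + (-1) ^ n * divdiff f x n) / 2) / Dn n x.
Proof.
  intros Hx Hnode. rewrite Bn_not_node by auto.
  pose proof (Dn_neq0 x Hx Hnode) as HD.
  assert (HN : Nn n f x = f x * Dn n x - rsum (fun k => (-1) ^ k * divdiff f x k) (S n)).
  { unfold Nn, Dn. rewrite <- rsum_scal, <- rsum_minus. apply rsum_ext. intros k Hk.
    unfold divdiff. pose proof (sub_node_neq0 x k Hnode ltac:(lia)). field. lra. }
  rewrite HN. unfold alt_sum_half_ends. field. auto.
Qed.

Lemma Bn_error_odd f x : -1 < x < 1 -> ~ is_node n x -> Nat.Odd n ->
  Bn n f x - f x - Ofun f x / Dn n x = - alt_sum_half_ends (divdiff f x) n / Dn n x.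
Proof.
  intros Hx Hnode [p Hp].
  pose proof (Dn_neq0 x Hx Hnode) as HD.
  rewrite Bn_sub_eq by auto. unfold divdiff, Ofun.
  assert (Hsign : (-1) ^ n = -1) by (rewrite Hp, Nat.add_1_r; apply pow_1_odd).
  rewrite node_0, node_last, Hsign. field. repeat split; lra.
Qed.

Lemma Bn_error_even f x : -1 < x < 1 -> ~ is_node n x -> Nat.Even n ->
  Bn n f x - f x - Efun f x / Dn n x = - alt_sum_half_ends (divdiff f x) n / Dn n x.
Proof.
  intros Hx Hnode [p Hp].
  pose proof (Dn_neq0 x Hx Hnode) as HD.
  rewrite Bn_sub_eq by auto. unfold divdiff, Efun.
  assert (Hsign : (-1) ^ n = 1) by (rewrite Hp; apply pow_1_even).
  rewrite node_0, node_last, Hsign. field. repeat split; lra.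
Qed.

End Berrut.

Lemma alt_sum_half_ends_ext (G H : nat -> R) n :
  (forall k, (k <= n)%nat -> G k = H k) -> alt_sum_half_ends G n = alt_sum_half_ends H n.
Proof.
  intros E. unfold alt_sum_half_ends. rewrite !E by lia.
  f_equal. apply rsum_ext. intros k Hk. rewrite E by lia. reflexivity.
Qed.

Lemma derivable_pt_lim_affine x d u : derivable_pt_lim (fun v => x + v * d) u d.
Proof.
  pose proof (derivable_pt_lim_plus (fct_cte x) (fun v => id v * d) u 0 (1 * d)
    (derivable_pt_lim_const x u)
    (derivable_pt_lim_scal_right id u 1 d (derivable_pt_lim_id u))) as H.
  replace (0 + 1 * d) with d in H by ring.
  exact (derivable_pt_lim_ext _ _ u d (fun v => eq_refl) H).
Qed.

Lemma derivable_pt_lim_rsum (G : nat -> R -> R) (G' : nat -> R) m u :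
  (forall k, (k < m)%nat -> derivable_pt_lim (G k) u (G' k)) ->
  derivable_pt_lim (fun v => rsum (fun k => G k v) m) u (rsum G' m).
Proof.
  induction m; intros H; simpl.
  - apply (derivable_pt_lim_ext (fct_cte 0)); [reflexivity|apply derivable_pt_lim_const].
  - apply (derivable_pt_lim_ext (plus_fct (fun v => rsum (fun k => G k v) m) (G m)));
      [reflexivity|].
    apply derivable_pt_lim_plus; [apply IHm; intros; apply H; lia|apply H; lia].
Qed.

Lemma derivable_pt_lim_alt_sum_half_ends (G : nat -> R -> R) (G' : nat -> R) n u :
  (forall k, (k <= n)%nat -> derivable_pt_lim (G k) u (G' k)) ->
  derivable_pt_lim (fun v => alt_sum_half_ends (fun k => G k v) n) u (alt_sum_half_ends G' n).
Proof.
  intros H. unfold alt_sum_half_ends.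
  apply (derivable_pt_lim_ext (minus_fct (fun v => rsum (fun k => (-1) ^ k * G k v) (S n))
    (mult_real_fct (/ 2) (plus_fct (G O) (mult_real_fct ((-1) ^ n) (G n)))))).
  { intros v. unfold minus_fct, plus_fct, mult_real_fct. field. }
  replace (rsum (fun k => (-1) ^ k * G' k) (S n) - (G' O + (-1) ^ n * G' n) / 2)
    with (rsum (fun k => (-1) ^ k * G' k) (S n) - / 2 * (G' O + (-1) ^ n * G' n)) by field.
  apply derivable_pt_lim_minus.
  - apply (derivable_pt_lim_rsum (fun k v => (-1) ^ k * G k v)). intros k Hk.
    apply (derivable_pt_lim_ext (mult_real_fct ((-1) ^ k) (G k))); [reflexivity|].
    apply derivable_pt_lim_scal, H. lia.
  - apply derivable_pt_lim_scal, derivable_pt_lim_plus; [apply H; lia|].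
    apply derivable_pt_lim_scal, H. lia.
Qed.

Section LinearExtension.
Variables (f F : R -> R).
Hypothesis Hder : forall y, -1 <= y <= 1 -> deriv_within f (-1) 1 y (F y).

(* The segments from [x] to the end nodes reach [-1] and [1], where the mean value
   theorem needs two-sided derivatives; hence [f] is continued by its tangent lines. *)
Definition lin_ext t :=
  if Rlt_dec t (-1) then f (-1) + F (-1) * (t + 1)
  else if Rlt_dec 1 t then f 1 + F 1 * (t - 1) else f t.

Lemma lin_ext_in t : -1 <= t <= 1 -> lin_ext t = f t.
Proof. intros. unfold lin_ext. destruct Rlt_dec; [lra|]. destruct Rlt_dec; [lra|auto]. Qed.

Lemma derivable_pt_lim_lin_ext y : -1 <= y <= 1 -> derivable_pt_lim lin_ext y (F y).
Proof.
  intros Hy eps Heps. destruct (Hder y Hy eps Heps) as [d [Hd Hquot]].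
  assert (Hr : exists r, 0 < r /\ forall h, Rabs h < r ->
            -1 <= y + h <= 1 \/ (y = -1 /\ h < 0) \/ (y = 1 /\ 0 < h)).
  { destruct (Req_dec y (-1)) as [->|Hy1]; [|destruct (Req_dec y 1) as [->|Hy2]].
    - exists 1. split; [lra|]. intros h Hh. apply Rabs_def2 in Hh. destruct (Rlt_dec h 0); lra.
    - exists 1. split; [lra|]. intros h Hh. apply Rabs_def2 in Hh. destruct (Rlt_dec 0 h); lra.
    - exists (Rmin (y + 1) (1 - y)). split; [apply Rmin_pos; lra|]. intros h Hh.
      apply Rabs_def2 in Hh. pose proof (Rmin_l (y + 1) (1 - y)).
      pose proof (Rmin_r (y + 1) (1 - y)). lra. }
  destruct Hr as [r [Hr Hside]].
  exists (mkposreal _ (Rmin_pos _ _ Hd Hr)). simpl. intros h Hh0 Hh.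
  pose proof (Rmin_l d r). pose proof (Rmin_r d r).
  rewrite (lin_ext_in y) by lra.
  destruct (Hside h ltac:(lra)) as [Hin|[[-> Hneg]|[-> Hpos]]].
  - rewrite lin_ext_in by auto. replace h with (y + h - y) at 2 by ring.
    apply Hquot; [auto|lra|]. replace (y + h - y) with h by ring. lra.
  - unfold lin_ext. destruct Rlt_dec; [|lra].
    replace ((f (-1) + F (-1) * (-1 + h + 1) - f (-1)) / h - F (-1)) with 0 by (field; lra).
    rewrite Rabs_R0. auto.
  - unfold lin_ext. destruct Rlt_dec; [lra|]. destruct Rlt_dec; [|lra].
    replace ((f 1 + F 1 * (1 + h - 1) - f 1) / h - F 1) with 0 by (field; lra).
    rewrite Rabs_R0. auto.
Qed.

Lemma alt_sum_half_ends_divdiff_mvt n x : (0 < n)%nat -> -1 < x < 1 -> ~ is_node n x ->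
  exists c, 0 <= c <= 1 /\
  alt_sum_half_ends (divdiff n f x) n =
  - (1 / 2) * alt_incr (x + c * (-1 - x)) (c * mesh (-1) 1 n) n F.
Proof.
  intros Hn Hx Hnode.
  set (d := fun k => node n k - x).
  set (phi := fun k u => (lin_ext (x + u * d k) - f x) / d k).
  assert (Hd : forall k, (k <= n)%nat -> d k <> 0).
  { intros k Hk E. apply (sub_node_neq0 n x k Hnode Hk). unfold d in E. lra. }
  assert (Hpath : forall k u, (k <= n)%nat -> 0 <= u <= 1 -> -1 <= x + u * d k <= 1).
  { intros k u Hk Hu. pose proof (node_in n Hn k Hk). unfold d.
    replace (x + u * (node n k - x)) with ((1 - u) * x + u * node n k) by ring. nra. }
  destruct (MVT_cor2 (fun u => alt_sum_half_ends (fun k => phi k u) n)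
              (fun u => alt_sum_half_ends (fun k => F (x + u * d k)) n) 0 1) as [c [Hmvt Hc]].
  { lra. }
  { intros u Hu. apply derivable_pt_lim_alt_sum_half_ends. intros k Hk. unfold phi.
    apply (derivable_pt_lim_ext (fun v => (comp lin_ext (fun v => x + v * d k) v - f x) * / d k));
      [reflexivity|].
    replace (F (x + u * d k)) with ((F (x + u * d k) * d k - 0) * / d k) by (field; auto).
    apply derivable_pt_lim_scal_right, derivable_pt_lim_minus; [|apply derivable_pt_lim_const].
    apply derivable_pt_lim_comp; [apply derivable_pt_lim_affine|].
    apply derivable_pt_lim_lin_ext, Hpath; auto; lra. }
  exists c. split; [lra|].
  assert (HK0 : alt_sum_half_ends (fun k => phi k 0) n = 0).
  { rewrite (alt_sum_half_ends_ext _ (fun _ => 0)).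
    - unfold alt_sum_half_ends. rewrite (rsum_ext _ (fun _ => 0)) by (intros; ring).
      rewrite rsum_const. field.
    - intros k Hk. unfold phi. rewrite Rmult_0_l, Rplus_0_r, lin_ext_in by lra.
      unfold Rdiv. ring. }
  assert (HK1 : alt_sum_half_ends (fun k => phi k 1) n = alt_sum_half_ends (divdiff n f x) n).
  { apply alt_sum_half_ends_ext. intros k Hk. unfold phi, d, divdiff.
    rewrite Rmult_1_l. replace (x + (node n k - x)) with (node n k) by ring.
    rewrite lin_ext_in by (apply node_in; auto). reflexivity. }
  rewrite <- HK1, <- (Rminus_0_r (alt_sum_half_ends _ n)), <- HK0, Hmvt, Rminus_0_r, Rmult_1_r.
  rewrite alt_sum_half_ends_by_parts. f_equal. unfold alt_incr.
  apply rsum_ext. intros l _. unfold d. rewrite !node_gridpt by auto. unfold gridpt.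
  f_equal. f_equal; f_equal; ring.
Qed.

End LinearExtension.

Lemma strict_incr_ge s : strict_incr s -> forall j, (j <= s j)%nat.
Proof. intros Hs j. induction j; [lia|]. specialize (Hs j (S j) ltac:(lia)). lia. Qed.

Lemma scaled_sup_to_zero_of_error_eq f (G : R -> R) s : AC1 f -> strict_incr s ->
  (forall j x, -1 < x < 1 -> ~ is_node (s j) x -> (0 < s j)%nat ->
     Bn (s j) f x - f x - G x / Dn (s j) x =
     - alt_sum_half_ends (divdiff (s j) f x) (s j) / Dn (s j) x) ->
  scaled_sup_to_zero s f G.
Proof.
  intros [F [Hder HAC]] Hs Herr eps Heps.
  destruct (alt_incr_abs_cont_small F (-1) 1 ltac:(lra) HAC eps Heps) as [eta [Heta Hsmall]].
  destruct (INR_archimed eta 2 Heta) as [J HJ].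
  exists (S J). intros j Hj x Hx Hnode.
  pose proof (strict_incr_ge s Hs j).
  rewrite Herr by (auto; lia).
  set (n := s j) in *. assert (Hn : (0 < n)%nat) by lia.
  destruct (alt_sum_half_ends_divdiff_mvt f F Hder n x Hn Hx Hnode) as [c [Hc ->]].
  set (h := mesh (-1) 1 n).
  assert (Hh : 0 < h) by (apply mesh_pos; auto; lra).
  assert (Hnh : INR n * h = 2) by (unfold h; rewrite INR_mul_mesh; auto; ring).
  assert (Hheta : h < eta).
  { apply mesh_lt; auto. assert (HJn : (S J <= n)%nat) by lia.
    apply le_INR in HJn. rewrite S_INR in HJn. nra. }
  set (A := alt_incr (x + c * (-1 - x)) (c * h) n F).
  assert (HA : Rabs A <= eps).
  { apply Hsmall; [split; nra|nra|].
    rewrite <- Rmult_assoc, (Rmult_comm (INR n)), Rmult_assoc, Hnh. nra. }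
  pose proof (Dn_abs_ge n Hn x Hx Hnode) as HD.
  pose proof (Dn_neq0 n Hn x Hx Hnode) as HD0.
  pose proof (INR_pos n Hn).
  replace (- (- (1 / 2) * A) / Dn n x) with (/ 2 * A * / Dn n x) by (field; auto).
  rewrite !Rabs_mult, (Rabs_pos_eq (/ 2)), Rabs_inv by lra.
  assert (/ Rabs (Dn n x) <= / (2 * INR n / 3)) by (apply Rinv_le_contravar; lra).
  apply Rle_trans with (INR n * (/ 2 * eps * / (2 * INR n / 3))).
  - apply Rmult_le_compat_l; [lra|]. apply Rmult_le_compat; try lra.
    + pose proof (Rabs_pos A). nra.
    + left. apply Rinv_0_lt_compat. lra.
  - replace (INR n * (/ 2 * eps * / (2 * INR n / 3))) with (3 / 4 * eps) by (field; lra). lra.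
Qed.

Theorem theorem2 (f : R -> R) (Hf : AC1 f) :
  (forall s : nat -> nat, strict_incr s -> (forall j, Nat.Odd (s j)) ->
     scaled_sup_to_zero s f (Ofun f)) /\
  (forall s : nat -> nat, strict_incr s -> (forall j, Nat.Even (s j)) ->
     scaled_sup_to_zero s f (Efun f)).
Proof.
  split; intros s Hs Hpar; apply scaled_sup_to_zero_of_error_eq; auto;
    intros j x Hx Hnode Hn.
  - apply Bn_error_odd; auto.
  - apply Bn_error_even; auto.
Qed.
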